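(* Let $n\in\mathbb{N}$, $K>0$, $\alpha,\beta,\kappa,a,c\in\mathbb{R}$, and let $H$ be a symmetric $n\times n$ real matrix with $-KI\preceq H\preceq KI$. Consider the symmetric $2n\times2n$ matrix $$A=\begin{pmatrix}\alpha I&\beta I+aH\\\beta I+aH&\kappa I+cH\end{pmatrix}.$$ If $-cK-\alpha-\kappa\le0$ in the case $c\le0$ (respectively $cK-\alpha-\kappa\le0$ in the case $c>0$), and $$a^2K^2-(c\alpha-2\beta a)K-\alpha\kappa+\beta^2\le0,\qquad a^2K^2+(c\alpha-2\beta a)K-\alpha\kappa+\beta^2\le0,$$ then $A$ is positive semidefinite.
   Context: $I$ denotes the $n\times n$ identity matrix and $\preceq$ the Loewner order on symmetric matrices. *)

From mathcomp Require Import all_boot all_order all_algebra.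
From mathcomp Require Import reals.
Set Implicit Arguments. Unset Strict Implicit. Unset Printing Implicit Defensive.
Import Order.TTheory GRing.Theory Num.Theory.
Local Open Scope ring_scope.

Definition is_symmetric_mx (R : pzRingType) (n : nat) (A : 'M[R]_n) : Prop := A^T = A.

Definition psdmx (R : numDomainType) (n : nat) (A : 'M[R]_n) : Prop :=
  forall x : 'cV[R]_n, 0 <= (x^T *m A *m x) 0 0.

Definition loewner_le (R : numDomainType) (n : nat) (A B : 'M[R]_n) : Prop :=
  psdmx (B - A).

From mathcomp Require Import all_boot all_order all_algebra.
From mathcomp Require Import reals ring lra.
Import Order.TTheory GRing.Theory Num.Theory.
Set Implicit Arguments. Unset Strict Implicit.
Local Open Scope ring_scope.

(* With [y = H v], [s0 = |v|^2], [s1 = <v, y>] and [s2 = |y|^2], the bounds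
   [-K <= H <= K] give [|s1| <= K s0] and [s2 <= K^2 s0].  For [alpha > 0],
   completing the square in [u] gives
     [alpha * x^T A x = |alpha u + beta v + a y|^2 + T]
   where [T = (alpha kappa - beta^2) s0 + (c alpha - 2 beta a) s1 - a^2 s2],
   and [2K T] is a nonnegative combination of [K^2 s0 - s2], [K s0 + s1] and
   [K s0 - s1] whose coefficients are [2 K a^2] and minus the two quadratic
   hypotheses.  The hypotheses force [alpha >= 0], and [alpha = 0] forces
   [beta = a = 0], leaving [kappa s0 + c s1 >= 0]. *)

Section DotProduct.
Variables (R : comPzRingType) (n : nat).

Definition dotmx (p q : 'cV[R]_n) : R := (p^T *m q) 0 0.

Lemma dotmxC p q : dotmx p q = dotmx q p.
Proof. by rewrite /dotmx -{1}(trmxK q) -trmx_mul mxE. Qed.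

Lemma dotmxDr p q r : dotmx p (q + r) = dotmx p q + dotmx p r.
Proof. by rewrite /dotmx mulmxDr mxE. Qed.

Lemma dotmxDl p q r : dotmx (q + r) p = dotmx q p + dotmx r p.
Proof. by rewrite dotmxC dotmxDr !(dotmxC p). Qed.

Lemma dotmxZr k p q : dotmx p (k *: q) = k * dotmx p q.
Proof. by rewrite /dotmx -scalemxAr mxE. Qed.

Lemma dotmxZl k p q : dotmx (k *: p) q = k * dotmx p q.
Proof. by rewrite dotmxC dotmxZr dotmxC. Qed.

Lemma dotmxNr p q : dotmx p (- q) = - dotmx p q.
Proof. by rewrite -scaleN1r dotmxZr mulN1r. Qed.

Lemma dotmxNl p q : dotmx (- p) q = - dotmx p q.
Proof. by rewrite dotmxC dotmxNr dotmxC. Qed.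

Lemma dotmx_mulmx_sym (H : 'M[R]_n) p q :
  is_symmetric_mx H -> dotmx p (H *m q) = dotmx (H *m p) q.
Proof. by move=> sH; rewrite /dotmx trmx_mul sH mulmxA. Qed.

Lemma qform_scalar_addZ (H : 'M[R]_n) k l p q :
  (p^T *m (k%:M + l *: H) *m q) 0 0 = k * dotmx p q + l * dotmx p (H *m q).
Proof.
by rewrite mulmxDr mulmxDl mul_mx_scalar -scalemxAl -scalemxAr -scalemxAl /dotmx mulmxA !mxE.
Qed.

Lemma qform_scalar k p q : (p^T *m k%:M *m q) 0 0 = k * dotmx p q.
Proof. by rewrite mul_mx_scalar -scalemxAl /dotmx !mxE. Qed.

End DotProduct.

Lemma dotmx_ge0 (R : realDomainType) n (p : 'cV[R]_n) : 0 <= dotmx p p.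
Proof. by rewrite /dotmx mxE; apply: sumr_ge0 => i _; rewrite mxE -expr2 sqr_ge0. Qed.

Section LoewnerBounds.
Variables (R : realDomainType) (n : nat) (K : R) (H : 'M[R]_n).
Hypotheses (sH : is_symmetric_mx H)
  (HgeK : loewner_le (- K%:M) H) (HleK : loewner_le H K%:M).

Lemma dotmx_mulmx_lbound v : 0 <= K * dotmx v v + dotmx v (H *m v).
Proof. by have := HgeK v; rewrite opprK addrC -{1}[H]scale1r qform_scalar_addZ mul1r. Qed.

Lemma dotmx_mulmx_ubound v : 0 <= K * dotmx v v - dotmx v (H *m v).
Proof. by have := HleK v; rewrite -scaleN1r qform_scalar_addZ mulN1r. Qed.

Lemma norm_dotmx_mulmx_le v : `|dotmx v (H *m v)| <= K * dotmx v v.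
Proof.
by rewrite ler_norml -subr_ge0 opprK addrC dotmx_mulmx_lbound -subr_ge0 dotmx_mulmx_ubound.
Qed.

(* Test the two bounds on [K v + H v] and [K v - H v]: the cubic terms cancel,
   as [(K+H)(K-H)(K+H) + (K-H)(K+H)(K-H) = 2K (K^2 - H^2)]. *)
Lemma dotmx_mulmx_sqr_le v :
  0 < K -> dotmx (H *m v) (H *m v) <= K ^+ 2 * dotmx v v.
Proof.
move=> K_gt0; set y := H *m v; set z := H *m y.
have Hw_add : H *m (K *: v + y) = K *: y + z by rewrite mulmxDr -scalemxAr.
have Hw_sub : H *m (K *: v - y) = K *: y - z by rewrite mulmxDr mulmxN -scalemxAr.
have vz_yy : dotmx v z = dotmx y y by rewrite dotmx_mulmx_sym.
have := dotmx_mulmx_ubound (K *: v + y); have := dotmx_mulmx_lbound (K *: v - y).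
rewrite Hw_add Hw_sub !(dotmxDl, dotmxDr, dotmxZl, dotmxZr, dotmxNl, dotmxNr).
rewrite vz_yy (dotmxC y v) => w_sub w_add.
have : 0 <= 2 * K * (K ^+ 2 * dotmx v v - dotmx y y) by lra.
by rewrite pmulr_rge0 ?subr_ge0 // mulr_gt0.
Qed.

End LoewnerBounds.

Section BlockForm.
Variables (R : comPzRingType) (n : nat).
Implicit Types (u v y : 'cV[R]_n) (H : 'M[R]_n).

Lemma qform_block alpha beta kappa a c H u v : is_symmetric_mx H ->
  ((col_mx u v)^T *m block_mx (alpha%:M) (beta%:M + a *: H)
                              (beta%:M + a *: H) (kappa%:M + c *: H)
                 *m col_mx u v) 0 0
  = alpha * dotmx u u + 2 * beta * dotmx u v + 2 * a * dotmx u (H *m v)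
    + kappa * dotmx v v + c * dotmx v (H *m v).
Proof.
move=> sH; have entryD (A B : 'M[R]_1) : (A + B) 0 0 = A 0 0 + B 0 0 by rewrite mxE.
rewrite tr_col_mx mul_row_block mul_row_col !mulmxDl !entryD.
rewrite !qform_scalar_addZ !qform_scalar (dotmxC v u) dotmx_mulmx_sym //.
by rewrite (dotmxC (H *m v) u); ring.
Qed.

Lemma mulr_form_completed_square alpha beta kappa a c u v y :
  alpha * (alpha * dotmx u u + 2 * beta * dotmx u v + 2 * a * dotmx u y
           + kappa * dotmx v v + c * dotmx v y)
  = dotmx (alpha *: u + beta *: v + a *: y) (alpha *: u + beta *: v + a *: y)
    + ((alpha * kappa - beta ^+ 2) * dotmx v v
       + (c * alpha - 2 * beta * a) * dotmx v y - a ^+ 2 * dotmx y y).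
Proof.
rewrite !(dotmxDl, dotmxDr, dotmxZl, dotmxZr).
by rewrite (dotmxC v u) (dotmxC y u) (dotmxC y v); ring.
Qed.

End BlockForm.

Section Coefficients.
Variables (R : realFieldType) (K alpha beta kappa a c : R).
Hypotheses (K_gt0 : 0 < K)
  (cond_sub : a ^+ 2 * K ^+ 2 - (c * alpha - 2 * beta * a) * K
              - alpha * kappa + beta ^+ 2 <= 0)
  (cond_add : a ^+ 2 * K ^+ 2 + (c * alpha - 2 * beta * a) * K
              - alpha * kappa + beta ^+ 2 <= 0).

Lemma coef_sqr_le : (a * K) ^+ 2 + beta ^+ 2 <= alpha * kappa.
Proof. by have := cond_sub; have := cond_add; rewrite exprMn; lra. Qed.

Lemma coef_alpha_ge0 : `|c| * K <= alpha + kappa -> 0 <= alpha.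
Proof.
move=> cK; have := coef_sqr_le; have := sqr_ge0 (a * K); have := sqr_ge0 beta.
have := mulr_ge0 (normr_ge0 c) (ltW K_gt0); nra.
Qed.

Lemma coef_alpha_eq0 : alpha = 0 -> beta = 0 /\ a = 0.
Proof.
move=> alpha0; have := coef_sqr_le; rewrite alpha0 mul0r => sqr_le0.
have /andP[] : ((a * K) ^+ 2 == 0) && (beta ^+ 2 == 0).
  by rewrite -paddr_eq0 ?sqr_ge0 // eq_le sqr_le0 addr_ge0 ?sqr_ge0.
by rewrite !sqrf_eq0 mulf_eq0 (gt_eqF K_gt0) orbF => /eqP -> /eqP ->.
Qed.

Lemma schur_term_ge0 s0 s1 s2 :
  `|s1| <= K * s0 -> s2 <= K ^+ 2 * s0 ->
  0 <= (alpha * kappa - beta ^+ 2) * s0 + (c * alpha - 2 * beta * a) * s1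
       - a ^+ 2 * s2.
Proof.
rewrite ler_norml => /andP[s1_ge s1_le] s2_le.
set T := _ - _.
pose f := a ^+ 2 * K ^+ 2 - alpha * kappa + beta ^+ 2.
pose g := (c * alpha - 2 * beta * a) * K.
have T2K : 2 * K * T = 2 * K * a ^+ 2 * (K ^+ 2 * s0 - s2)
                       + (K * s0 + s1) * - (f - g) + (K * s0 - s1) * - (f + g).
  by rewrite /T /f /g; ring.
have fg_sub : f - g <= 0 by move: cond_sub; rewrite /f /g; lra.
have fg_add : f + g <= 0 by move: cond_add; rewrite /f /g; lra.
rewrite -(pmulr_rge0 _ (mulr_gt0 (ltr0Sn _ 1) K_gt0)) T2K.
have K_ge0 := ltW K_gt0.
have coef_ge0 : 0 <= 2 * K * a ^+ 2 by rewrite mulr_ge0 ?sqr_ge0 // mulr_ge0.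
rewrite !addr_ge0 // mulr_ge0 ?oppr_ge0 ?subr_ge0 //; lra.
Qed.

Lemma cross_term_ge0 s0 s1 :
  `|c| * K <= kappa -> `|s1| <= K * s0 -> 0 <= kappa * s0 + c * s1.
Proof.
move=> cK s1_le; have s0_ge0 : 0 <= s0.
  by rewrite -(pmulr_rge0 _ K_gt0); apply: le_trans s1_le.
have : `|c * s1| <= kappa * s0.
  rewrite normrM; apply: le_trans (ler_wpM2l (normr_ge0 c) s1_le) _.
  by rewrite mulrA ler_wpM2r.
by rewrite ler_norml => /andP[]; lra.
Qed.

End Coefficients.

Theorem propositionF18 (R : realType) (n : nat) (K alpha beta kappa a c : R)
    (H : 'M[R]_n) :
  0 < K ->
  is_symmetric_mx H ->
  loewner_le (- (K%:M)) H -> loewner_le H (K%:M) ->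
  (c <= 0 -> - c * K - alpha - kappa <= 0) ->
  (0 < c -> c * K - alpha - kappa <= 0) ->
  a ^+ 2 * K ^+ 2 - (c * alpha - 2 * beta * a) * K - alpha * kappa + beta ^+ 2 <= 0 ->
  a ^+ 2 * K ^+ 2 + (c * alpha - 2 * beta * a) * K - alpha * kappa + beta ^+ 2 <= 0 ->
  psdmx (block_mx (alpha%:M) (beta%:M + a *: H)
                  (beta%:M + a *: H) (kappa%:M + c *: H) : 'M[R]_(n + n)).
Proof.
move=> K_gt0 sH HgeK HleK c_le0 c_gt0 cond_sub cond_add x.
have cK : `|c| * K <= alpha + kappa.
  have [c_le|c_pos] := lerP c 0.
  - by rewrite ler0_norm //; have := c_le0 c_le; lra.
  - by rewrite gtr0_norm //; have := c_gt0 c_pos; lra.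
have s1_le := norm_dotmx_mulmx_le HgeK HleK (dsubmx x).
have s2_le := dotmx_mulmx_sqr_le sH HgeK HleK (dsubmx x) K_gt0.
rewrite -(vsubmxK x) qform_block //.
move: (coef_alpha_ge0 K_gt0 cond_sub cond_add cK).
rewrite le_eqVlt => /predU1P[alpha0|alpha_gt0].
- have [-> ->] := coef_alpha_eq0 K_gt0 cond_sub cond_add (esym alpha0).
  rewrite -alpha0 add0r in cK; rewrite -alpha0 !(mul0r, mulr0, add0r).
  exact: (cross_term_ge0 K_gt0 cK s1_le).
- rewrite -(pmulr_rge0 _ alpha_gt0) mulr_form_completed_square addr_ge0 ?dotmx_ge0 //.
  exact: (schur_term_ge0 K_gt0 cond_sub cond_add s1_le s2_le).
Qed.
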